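(* For every integer $p$ and every first-order graph formula $\phi$ with free variables among $x_1,\dots,x_p$ there exists a polynomial $P_\phi\in\mathbb Z[X_{i,j}:1\le i<j\le p]$ (in $\binom p2$ variables) such that for every sequence $(G_n)_{n\in\mathbb N}$ of finite graphs that converges elementarily to the Rado graph the following holds: if $(G_n)$ is L-convergent to a graphon $W$, then $$\lim_{n\to\infty}\langle\phi,G_n\rangle=\int_{[0,1]^p}P_\phi\big((W(x_i,x_j))_{1\le i<j\le p}\big)\,\mathrm dx_1\cdots\mathrm dx_p.$$
   Context: $\langle\phi,G\rangle=|\{(v_1,\dots,v_p)\in V(G)^p:G\models\phi(v_1,\dots,v_p)\}|/|G|^p$. $(G_n)$ converges elementarily to $H$ if for every first-order sentence $\theta$, $H\models\theta$ iff $G_n\models\theta$ for all sufficiently large $n$. The Rado graph is the unique countable graph such that for all finite disjoint vertex sets $A,B$ there is a vertex outside $A\cup B$ adjacent to all of $A$ and none of $B$. A graphon is a symmetric measurable $W:[0,1]^2\to[0,1]$; $(G_n)$ is L-convergent to $W$ if for every finite graph $F$ on $\{1,\dots,k\}$, $\hom(F,G_n)/|G_n|^k\to\int_{[0,1]^k}\prod_{ij\in E(F)}W(x_i,x_j)\,\mathrm dx$. *)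

From HB Require Import structures.
From mathcomp Require Import all_boot all_order all_algebra.
From mathcomp Require Import all_classical all_reals all_analysis.
From mathcomp Require mpoly.

Set Implicit Arguments.
Unset Strict Implicit.
Unset Printing Implicit Defensive.

Import Order.TTheory GRing.Theory Num.Theory.
Import numFieldNormedType.Exports.
Local Open Scope classical_set_scope.
Local Open Scope ring_scope.

(* First-order formulas in the language of graphs (one binary relation
   symbol E for adjacency, plus equality).  Variables are named by natural
   numbers: variable [i] stands for x_{i+1}. *)
Inductive fo : Type :=
  | FTrue  : fo
  | FFalse : fo
  | FEq    : nat -> nat -> fo
  | FAdj   : nat -> nat -> fo
  | FNot   : fo -> fo
  | FAnd   : fo -> fo -> fo
  | FOr    : fo -> fo -> fo
  | FImp   : fo -> fo -> fo
  | FEx    : nat -> fo -> fo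
  | FAll   : nat -> fo -> fo.

Fixpoint free_var (v : nat) (phi : fo) : bool :=
  match phi with
  | FTrue | FFalse => false
  | FEq i j | FAdj i j => (v == i) || (v == j)
  | FNot f => free_var v f
  | FAnd f g | FOr f g | FImp f g => free_var v f || free_var v g
  | FEx i f | FAll i f => (v != i) && free_var v f
  end.

Definition free_among (p : nat) (phi : fo) : Prop :=
  forall v, free_var v phi -> (v < p)%N.

Definition sentence (phi : fo) : Prop := forall v, ~~ free_var v phi.

Fixpoint sat (V : Type) (adj : V -> V -> bool) (env : nat -> V) (phi : fo)
    : Prop :=
  match phi with
  | FTrue => True
  | FFalse => False
  | FEq i j => env i = env j
  | FAdj i j => adj (env i) (env j)
  | FNot f => ~ sat adj env f
  | FAnd f g => sat adj env f /\ sat adj env g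
  | FOr f g => sat adj env f \/ sat adj env g
  | FImp f g => sat adj env f -> sat adj env g
  | FEx i f => exists a : V, sat adj (fun k => if k == i then a else env k) f
  | FAll i f => forall a : V, sat adj (fun k => if k == i then a else env k) f
  end.

(* A graph models a sentence (structures are nonempty, so "for all
   assignments" is the usual notion). *)
Definition models (V : Type) (adj : V -> V -> bool) (theta : fo) : Prop :=
  forall env : nat -> V, sat adj env theta.

Record fin_graph := FinGraph {
  fV : finType;
  fadj : rel fV;
  fadj_sym : symmetric fadj;
  fadj_irr : irreflexive fadj;
  fpt : fV }.

(* assignment x_{i+1} |-> t_i for a p-tuple t (default vertex beyond p,
   irrelevant for formulas with free variables among x_1..x_p) *)
Definition env_of (G : fin_graph) (p : nat) (t : p.-tuple (fV G)) : nat -> fV G :=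
  fun i => nth (fpt G) t i.

Definition stone_pairing {R : realType} (p : nat) (phi : fo) (G : fin_graph) : R :=
  (#|[set t : p.-tuple (fV G) | `[< sat (@fadj G) (env_of t) phi >] ]|%:R
    / (#|fV G|%:R ^+ p)).

Definition is_rado (V : countType) (adj : rel V) : Prop :=
  symmetric adj /\ irreflexive adj /\
  forall A B : seq V, (forall x, x \in A -> x \notin B) ->
    exists v, v \notin A /\ v \notin B /\
      (forall a, a \in A -> adj v a) /\ (forall b, b \in B -> ~~ adj v b).

Definition elem_conv (G : nat -> fin_graph) (V : Type) (adj : V -> V -> bool)
    : Prop :=
  forall theta, sentence theta ->
    (models adj theta <-> \forall n \near \oo, models (@fadj (G n)) theta).

(* Integration over [0,1]^k (Lebesgue measure), as the iterated integral
   int_0^1 ... int_0^1 f(x_1,...,x_k) dx_k ... dx_1.  (For the bounded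
   measurable integrands used below this equals the integral w.r.t. the
   k-fold product of Lebesgue measure, by Fubini.) *)
Fixpoint cube_int {R : realType} (k : nat) : (k.-tuple R -> R) -> R :=
  match k with
  | 0 => fun f => f [tuple]
  | k'.+1 => fun f =>
      Rintegral (@lebesgue_measure R) `[0, 1]%classic
        (fun x => @cube_int R k' (fun t => f (cons_tuple x t)))
  end.

Definition unit_sq {R : realType} : set (R * R) :=
  `[0, 1]%classic `*` `[0, 1]%classic.

Definition graphon {R : realType} (W : R -> R -> R) : Prop :=
  measurable_fun (@unit_sq R) (fun z : R * R => W z.1 z.2) /\
  (forall x y, x \in `[0, 1] -> y \in `[0, 1] -> W x y = W y x) /\
  (forall x y, x \in `[0, 1] -> y \in `[0, 1] -> 0 <= W x y <= 1).

Definition simple_graph (k : nat) (F : rel 'I_k) : Prop :=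
  symmetric F /\ irreflexive F.

Definition hom_count (k : nat) (F : rel 'I_k) (G : fin_graph) : nat :=
  #|[set f : {ffun 'I_k -> fV G} |
      [forall i, forall j, F i j ==> fadj (f i) (f j)]]|.

Definition hom_dens_graphon {R : realType} (k : nat) (F : rel 'I_k)
    (W : R -> R -> R) : R :=
  cube_int (fun x : k.-tuple R =>
    \prod_(ij : 'I_k * 'I_k | (ij.1 < ij.2)%N && F ij.1 ij.2)
       W (tnth x ij.1) (tnth x ij.2)).

Definition L_conv {R : realType} (G : nat -> fin_graph) (W : R -> R -> R) : Prop :=
  forall (k : nat) (F : rel 'I_k), simple_graph F ->
    (fun n => (hom_count F (G n))%:R / (#|fV (G n)|%:R ^+ k) : R)
      @ \oo --> hom_dens_graphon F W.

(* Polynomials in the binom(p,2) variables X_{i,j}, 1 <= i < j <= p. *)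
Definition pair_idx (p : nat) : finType :=
  {ij : 'I_p * 'I_p | (ij.1 < ij.2)%N}.

Definition eval_pairs {R : realType} (p : nat)
    (P : mpoly.mpoly #|pair_idx p| int) (y : pair_idx p -> R) : R :=
  mpoly.mmap (fun c : int => c%:~R) (fun k => y (enum_val k)) P.

From HB Require Import structures.
From mathcomp Require Import all_boot all_order all_algebra.
From mathcomp Require Import all_classical all_reals all_analysis.
From mathcomp Require mpoly.
Import (canonicals) mpoly.
From mathcomp Require Import measurable_realfun.
From mathcomp Require Import zify.
Import Order.TTheory GRing.Theory Num.Theory.
Import numFieldNormedType.Exports.
Local Open Scope classical_set_scope.
Local Open Scope ring_scope.
Set Implicit Arguments.
Unset Strict Implicit.
Unset Printing Implicit Defensive.

(* By a back-and-forth argument, in the Rado graph the truth of phi at an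
   injective p-tuple depends only on its atomic type E, i.e. on which pairs
   of the tuple are adjacent; call E good when phi holds there.  For every E
   the sentence "all tuples of type E satisfy phi" (or "falsify phi") holds
   in the Rado graph, hence in G_n for large n, and |G_n| -> oo.  So up to
   the O(p^2 / |G_n|) proportion of non-injective tuples, <phi, G_n> is the
   density of tuples with a good type.  The indicator of a type is
   prod_{u in E} X_u * prod_{u notin E} (1 - X_u) evaluated at the adjacency
   values, and expanding the products writes this density as an integer
   combination of homomorphism densities t(F, G_n).  These converge to
   t(F, W), whose same combination is the integral of
   P_phi = sum_{E good} prod_{u in E} X_u * prod_{u notin E} (1 - X_u). *)

Definition env_upd {V : Type} (e : nat -> V) (k : nat) (a : V) : nat -> V :=
  fun i => if i == k then a else e i.

Definition partial_iso {V1 V2 : Type} (adj1 : V1 -> V1 -> bool)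
    (adj2 : V2 -> V2 -> bool) (S : seq nat) (e1 : nat -> V1) (e2 : nat -> V2) :=
  forall i j, i \in S -> j \in S ->
    (e1 i = e1 j <-> e2 i = e2 j) /\ adj1 (e1 i) (e1 j) = adj2 (e2 i) (e2 j).

Lemma partial_iso_sym {V1 V2 : Type} (adj1 : V1 -> V1 -> bool)
    (adj2 : V2 -> V2 -> bool) S e1 e2 :
  partial_iso adj1 adj2 S e1 e2 -> partial_iso adj2 adj1 S e2 e1.
Proof. by move=> H i j iS jS; have [[h1 h2] h3] := H i j iS jS. Qed.

Lemma partial_iso_cons {V1 V2 : Type} (adj1 : rel V1) (adj2 : rel V2) S e1 e2 k a b :
  symmetric adj1 -> irreflexive adj1 -> symmetric adj2 -> irreflexive adj2 ->
  partial_iso adj1 adj2 S e1 e2 ->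
  (forall i, i \in S -> i != k ->
    (a = e1 i <-> b = e2 i) /\ adj1 a (e1 i) = adj2 b (e2 i)) ->
  partial_iso adj1 adj2 (k :: S) (env_upd e1 k a) (env_upd e2 k b).
Proof.
move=> sym1 irr1 sym2 irr2 H key i j; rewrite !inE /env_upd.
case: (eqVneq i k) => [-> _|ik /= iS]; case: (eqVneq j k) => [-> _|jk /= jS].
- by rewrite irr1 irr2.
- exact: key.
- have [[h1 h2] h3] := key i iS ik.
  by rewrite sym1 sym2 h3; split=> //; split=> /esym ?; apply/esym; auto.
- exact: H.
Qed.

(* The forth step of the back-and-forth argument: the extension property of
   the target supplies an image for a new point whose relation to the old
   ones is fixed by the partial isomorphism. *)
Lemma rado_extend {V1 : eqType} {V2 : countType} (adj1 : rel V1) (adj2 : rel V2)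
    S e1 e2 k :
  symmetric adj1 -> irreflexive adj1 -> is_rado adj2 ->
  partial_iso adj1 adj2 S e1 e2 ->
  forall a, exists b, partial_iso adj1 adj2 (k :: S) (env_upd e1 k a) (env_upd e2 k b).
Proof.
move=> sym1 irr1 [sym2 [irr2 ext2]] H a.
suff [b key] : exists b, forall i, i \in S -> i != k ->
    (a = e1 i <-> b = e2 i) /\ adj1 a (e1 i) = adj2 b (e2 i).
  by exists b; apply: partial_iso_cons.
have [/hasP [j jS /andP [jk /eqP <-]]|fresh] :=
  boolP (has (fun j => (j != k) && (e1 j == a)) S).
  by exists (e2 j) => i iS _; apply: H.
pose A := [seq e2 i | i <- S & (i != k) && adj1 a (e1 i)].
pose B := [seq e2 i | i <- S & (i != k) && ~~ adj1 a (e1 i)].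
have AB x : x \in A -> x \notin B.
  case/mapP=> i; rewrite mem_filter => /andP [/andP [_ ai] iS] ->.
  apply/mapP=> -[i']; rewrite mem_filter => /andP [/andP [_ ai'] i'S] e.
  have [[_ e12] _] := H i i' iS i'S.
  by move: ai'; rewrite -(e12 e) ai.
have [b [bA [bB [adjA adjB]]]] := ext2 A B AB.
exists b => i iS ik.
have ane : a <> e1 i.
  by move=> ae; move/hasP: fresh; apply; exists i; rewrite // ik ae eqxx.
case ai: (adj1 a (e1 i)).
  have iA : e2 i \in A by apply: map_f; rewrite mem_filter ik ai iS.
  by split; [split=> // be; move: bA; rewrite be iA | rewrite adjA].
have iB : e2 i \in B by apply: map_f; rewrite mem_filter ik ai iS.
by split; [split=> // be; move: bB; rewrite be iB | apply/esym/negbTE/adjB].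
Qed.

Lemma free_var_sub_cons (S : seq nat) k f :
  (forall v, (v != k) && free_var v f -> v \in S) ->
  forall v, free_var v f -> v \in k :: S.
Proof. by move=> fv v h; rewrite inE; case: eqP => //= /eqP vk; apply: fv; rewrite vk. Qed.

Lemma sat_partial_iso (V1 V2 : countType) (adj1 : rel V1) (adj2 : rel V2) :
  is_rado adj1 -> is_rado adj2 -> forall phi S e1 e2,
  (forall v, free_var v phi -> v \in S) ->
  partial_iso adj1 adj2 S e1 e2 -> (sat adj1 e1 phi <-> sat adj2 e2 phi).
Proof.
move=> r1 r2; have [sym1 [irr1 _]] := r1; have [sym2 [irr2 _]] := r2.
elim=> [||i j|i j|f IH|f IHf g IHg|f IHf g IHg|f IHf g IHg|k f IH|k f IH]
  S e1 e2 fv H //=;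
  try (have fvl v : free_var v f -> v \in S by move=> h; apply: fv; rewrite /= h);
  try (have fvr v : free_var v g -> v \in S by move=> h; apply: fv; rewrite /= h orbT).
- have [iS jS] : i \in S /\ j \in S by split; apply: fv; rewrite /= eqxx ?orbT.
  by have [] := H i j iS jS.
- have [iS jS] : i \in S /\ j \in S by split; apply: fv; rewrite /= eqxx ?orbT.
  by have [_ ->] := H i j iS jS.
- by rewrite (IH S e1 e2 fvl H).
- by rewrite (IHf S e1 e2 fvl H) (IHg S e1 e2 fvr H).
- by rewrite (IHf S e1 e2 fvl H) (IHg S e1 e2 fvr H).
- by rewrite (IHf S e1 e2 fvl H) (IHg S e1 e2 fvr H).
- have fv' := free_var_sub_cons fv.
  split=> [[a Ha]|[b Hb]].
    have [b Hb] := rado_extend k sym1 irr1 r2 H a.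
    by exists b; apply/(IH _ _ _ fv' Hb).
  have [a Ha] := rado_extend k sym2 irr2 r1 (partial_iso_sym H) b.
  by exists a; apply/(IH _ _ _ fv' (partial_iso_sym Ha)).
- have fv' := free_var_sub_cons fv.
  split=> Hall x.
    have [a Ha] := rado_extend k sym2 irr2 r1 (partial_iso_sym H) x.
    by apply/(IH _ _ _ fv' (partial_iso_sym Ha)); exact: Hall.
  have [b Hb] := rado_extend k sym1 irr1 r2 H x.
  by apply/(IH _ _ _ fv' Hb); exact: Hall.
Qed.

Definition big_and {I : Type} (s : seq I) (F : I -> fo) : fo :=
  foldr (fun x f => FAnd (F x) f) FTrue s.

Lemma sat_big_and (V : Type) (adj : V -> V -> bool) e (I : eqType) (s : seq I) F :
  sat adj e (big_and s F) <-> forall x, x \in s -> sat adj e (F x).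
Proof.
elim: s => [|x s IH] /=; first by split.
split=> [[Fx /IH Fs] y|H].
  by rewrite inE => /orP [/eqP ->|/Fs].
by split; [apply: H; rewrite mem_head | apply/IH => y ys; apply: H; rewrite inE ys orbT].
Qed.

Lemma free_var_big_and v (I : Type) (s : seq I) F :
  free_var v (big_and s F) = has (fun x => free_var v (F x)) s.
Proof. by elim: s => //= x s ->. Qed.

Definition forall_vars (l : seq nat) (f : fo) : fo := foldr FAll f l.

Lemma sat_forall_vars (V : Type) (adj : V -> V -> bool) l f e :
  sat adj e (forall_vars l f) <->
  forall g, (forall k, k \notin l -> g k = e k) -> sat adj g f.
Proof.
elim: l e => [|k l IH] e /=.
  split=> [H g Hg|H]; last exact: H.
  by have -> : g = e by apply/funext => x; exact: Hg.
split=> [H g Hg|H a].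
  apply: ((IH _).1 (H (g k))) => k' k'l.
  by case: eqP => [->|/eqP k'k] //; apply: Hg; rewrite inE negb_or k'k.
apply/IH => g Hg; apply: H => k'; rewrite inE negb_or => /andP [k'k k'l].
by rewrite Hg // (negbTE k'k).
Qed.

Lemma free_var_forall_vars v l f :
  free_var v (forall_vars l f) = (v \notin l) && free_var v f.
Proof. by elim: l => //= k l ->; rewrite inE negb_or andbA. Qed.

Definition distinct_formula (p : nat) : fo :=
  big_and (enum (pair_idx p)) (fun u => FNot (FEq (val u).1 (val u).2)).

Definition edge_literal (b : bool) (i j : nat) : fo :=
  if b then FAdj i j else FNot (FAdj i j).

(* The atomic type of an injective p-tuple: [E u] records whether the two
   vertices indexed by the pair [u] are adjacent. *)
Definition type_formula p (E : {ffun pair_idx p -> bool}) : fo :=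
  FAnd (distinct_formula p)
    (big_and (enum (pair_idx p)) (fun u => edge_literal (E u) (val u).1 (val u).2)).

Definition has_type (V : Type) (adj : V -> V -> bool) p
    (E : {ffun pair_idx p -> bool}) (g : nat -> V) : Prop :=
  (forall u : pair_idx p, g (val u).1 <> g (val u).2) /\
  (forall u : pair_idx p, adj (g (val u).1) (g (val u).2) = E u).

Lemma sat_distinct_formula (V : Type) (adj : V -> V -> bool) p g :
  sat adj g (distinct_formula p) <->
  forall u : pair_idx p, g (val u).1 <> g (val u).2.
Proof. by rewrite sat_big_and; split=> H u; [apply: H; rewrite mem_enum | move=> _; apply: H]. Qed.

Lemma sat_type_formula (V : Type) (adj : V -> V -> bool) p E g :
  sat adj g (@type_formula p E) <-> has_type adj E g.
Proof.
have lit u : sat adj g (edge_literal (E u) (val u).1 (val u).2) <->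
    adj (g (val u).1) (g (val u).2) = E u.
  by rewrite /edge_literal; case: (E u) => /=; [|split=> [/negP/negbTE|->]].
rewrite /= sat_distinct_formula sat_big_and.
split=> -[D A]; split=> // u; first by apply/lit/A; rewrite mem_enum.
by move=> _; apply/lit.
Qed.

Lemma free_var_type_formula p E v : free_var v (@type_formula p E) -> (v < p)%N.
Proof.
rewrite /= !free_var_big_and => /orP [] /hasP [u _] /=;
  first (by case/orP=> /eqP ->).
by rewrite /edge_literal; case: (E u) => /= /orP [] /eqP ->.
Qed.

Lemma distinct_card (V : finType) (adj : V -> V -> bool) M g :
  sat adj g (distinct_formula M) -> (M <= #|V|)%N.
Proof.
move/sat_distinct_formula => D.
suff inj : injective (fun i : 'I_M => g i) by rewrite -(card_ord M) (leq_card _ inj).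
move=> i j gij; apply/val_inj.
case: (ltngtP i j) => // [ij|ji]; exfalso.
- exact: (D (exist _ (i, j) ij)).
- exact: (D (exist _ (j, i) ji) (esym gij)).
Qed.

Lemma has_type_partial_iso (V1 V2 : Type) (adj1 : rel V1) (adj2 : rel V2) p
    (E : {ffun pair_idx p -> bool}) g1 g2 :
  symmetric adj1 -> irreflexive adj1 -> symmetric adj2 -> irreflexive adj2 ->
  has_type adj1 E g1 -> has_type adj2 E g2 -> partial_iso adj1 adj2 (iota 0 p) g1 g2.
Proof.
move=> sym1 irr1 sym2 irr2 [D1 A1] [D2 A2].
have lt i j (ip : (i < p)%N) (jp : (j < p)%N) : (i < j)%N ->
    (g1 i = g1 j <-> g2 i = g2 j) /\ adj1 (g1 i) (g1 j) = adj2 (g2 i) (g2 j).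
  move=> ij; pose u : pair_idx p := exist _ (Ordinal ip, Ordinal jp) ij.
  have := D1 u; have := D2 u; have := A1 u; have := A2 u; rewrite /= => -> -> d2 d1.
  by split=> //; split=> ?; exfalso; auto.
move=> i j; rewrite !mem_iota !add0n => /andP [_ ip] /andP [_ jp].
case: (ltngtP i j) => [ij|ji|->]; first exact: lt; last by rewrite irr1 irr2.
have [e12 adj12] := lt j i jp ip ji; rewrite sym1 sym2 adj12.
by split=> //; split=> /esym/e12/esym.
Qed.

Definition holds_on_type p (phi : fo) (E : {ffun pair_idx p -> bool}) : Prop :=
  forall (V : countType) (adj : rel V), is_rado adj ->
    forall g : nat -> V, has_type adj E g -> sat adj g phi.

(* Two tuples of the same type in Rado graphs are related by a partial
   isomorphism, and those preserve every formula. *)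
Lemma rado_sat_iff_holds_on_type (V : countType) (adj : rel V) p phi
    (E : {ffun pair_idx p -> bool}) g :
  is_rado adj -> free_among p phi -> has_type adj E g ->
  sat adj g phi <-> holds_on_type phi E.
Proof.
move=> r fphi Eg; split=> [phig V' adj' r' g' Eg'|]; last exact.
have [[sym [irr _]] [sym' [irr' _]]] := (r, r').
have fvS v : free_var v phi -> v \in iota 0 p by move/fphi; rewrite mem_iota add0n.
exact/(sat_partial_iso r r' fvS (has_type_partial_iso sym irr sym' irr' Eg Eg')).
Qed.

Definition type_decision p phi (E : {ffun pair_idx p -> bool}) : fo :=
  forall_vars (iota 0 p)
    (FImp (type_formula E) (if `[< holds_on_type phi E >] then phi else FNot phi)).

Lemma type_decision_sentence p phi (E : {ffun pair_idx p -> bool}) :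
  free_among p phi -> sentence (type_decision phi E).
Proof.
move=> fphi v; rewrite free_var_forall_vars mem_iota add0n /=.
apply/negP => /andP [/negP vp h]; apply: vp; move: h.
by case/orP=> [/free_var_type_formula|]; [|case: `[< _ >] => /= /fphi].
Qed.

Lemma rado_models_type_decision (V : countType) (adj : rel V) p phi
    (E : {ffun pair_idx p -> bool}) :
  is_rado adj -> free_among p phi -> models adj (type_decision phi E).
Proof.
move=> r fphi env; apply/sat_forall_vars => g _ /= /sat_type_formula Eg.
have iff := rado_sat_iff_holds_on_type r fphi Eg.
by case: asboolP => hold /=; [exact/iff | move/iff].
Qed.

Lemma models_type_decision (V : Type) (adj : V -> V -> bool) p phi
    (E : {ffun pair_idx p -> bool}) g :
  models adj (type_decision phi E) -> has_type adj E g ->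
  sat adj g phi <-> holds_on_type phi E.
Proof.
move=> M /sat_type_formula Eg.
have /= := (sat_forall_vars _ _ _ _).1 (M g) g (fun _ _ => erefl).
by move=> /(_ Eg); case: asboolP => // nE nphi; split.
Qed.

Definition at_least (M : nat) : fo :=
  FNot (forall_vars (iota 0 M) (FNot (distinct_formula M))).

Lemma at_least_sentence M : sentence (at_least M).
Proof.
move=> v; rewrite /= free_var_forall_vars mem_iota add0n /= free_var_big_and.
apply/negP => /andP [/negP vM /hasP [u _]] /= /orP [] /eqP vu;
  by apply: vM; rewrite vu.
Qed.

Lemma rado_models_at_least (V : countType) (adj : rel V) M :
  is_rado adj -> models adj (at_least M).
Proof.
move=> r env /= /sat_forall_vars noM.
have [s [us ss]] : exists s : seq V, uniq s /\ size s = M.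
  have [_ [_ ext]] := r; elim: M {noM} => [|M [s [us ss]]]; first by exists [::].
  have [v [vs _]] := ext s [::] (fun _ _ => erefl).
  by exists (v :: s); rewrite /= vs us ss.
pose g i := if (i < M)%N then nth (env 0%N) s i else env i.
apply: (noM g) => [k|]; first by rewrite mem_iota add0n /g /= => /negbTE ->.
apply/sat_distinct_formula => u; rewrite /g !ltn_ord => /eqP.
rewrite nth_uniq ?ss // => /eqP /val_inj e.
by have := valP u; rewrite /= e ltnn.
Qed.

Lemma models_at_least_card (G : fin_graph) M :
  models (@fadj G) (at_least M) -> (M <= #|fV G|)%N.
Proof.
move=> /(_ (fun _ => fpt G)) /=; case: (leqP M #|fV G|) => // small; case.
by apply/sat_forall_vars => g _ /distinct_card; rewrite leqNgt small.
Qed.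

Section CubeIntegral.
Variable R : realType.
Local Notation lam := (@lebesgue_measure R).
Local Notation I01 := (`[0, 1]%classic : set R).

Lemma lebesgue_measure_unit : lam I01 = 1%E.
Proof. by rewrite lebesgue_measure_itv /= lte01 oppr0 adde0. Qed.

Lemma bounded_integrable_unit (f : R -> R) (M : R) :
  measurable_fun setT f -> (forall y, `|f y| <= M) ->
  lam.-integrable I01 (EFin \o f).
Proof.
move=> mf fM; apply: measurable_bounded_integrable => //.
- by change (lam I01 < +oo)%E; rewrite lebesgue_measure_unit ltry.
- exact: measurable_funTS.
- exists M; split; first by rewrite num_real.
  move=> x Mx y _ /=; exact: (le_trans (fM y) (ltW Mx)).
Qed.

Lemma Rintegral_unit_bounded01 (f : R -> R) : measurable_fun setT f -> (forall y, 0 <= f y <= 1) ->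
  0 <= \int[lam]_(y in I01) f y <= 1.
Proof.
move=> mf fb; apply/andP; split.
  by apply: Rintegral_ge0 => y _; case/andP: (fb y).
have i1 : lam.-integrable I01 (EFin \o f).
  by apply: (@bounded_integrable_unit _ 1) => // y; case/andP: (fb y) => h0 h1; rewrite ger0_norm.
have i2 : lam.-integrable I01 (EFin \o (fun _ : R => (1 : R))).
  by apply: (@bounded_integrable_unit _ 1) => // y; rewrite normr1.
apply: (le_trans (le_Rintegral _ i1 i2 _)) => //.
  by move=> y _; case/andP: (fb y).
rewrite Rintegral_cst //.
by change (1 * fine (lam I01) <= 1); rewrite lebesgue_measure_unit /= mul1r.
Qed.

Lemma measurable_Rintegral_unit d (X : measurableType d) (h : (X * measurableTypeR R)%type -> R) :
  measurable_fun setT h -> (forall z, 0 <= h z) ->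
  measurable_fun setT (fun x => \int[lam]_(y in I01) h (x, y)).
Proof.
move=> mh h0.
have mD : measurable (setT `*` I01 : set (X * measurableTypeR R)%type).
  by apply: measurableX.
pose F : (X * measurableTypeR R)%type -> \bar R :=
  fun z => ((h \_ (setT `*` I01)) z)%:E.
have mF : measurable_fun setT F.
  apply/measurable_EFinP.
  have := (@measurable_restrict _ _ (X * measurableTypeR R)%type R _ _ h mD measurableT).1.
  apply; exact: measurable_funTS.
have F0 z : (0 <= F z)%E.
  by rewrite /F /patch lee_fin; case: ifP => // _; exact: h0.
have := @measurable_fun_fubini_tonelli_F _ _ X _ R lam F mF F0.
move=> /(measurableT_comp (fine_measurable measurableT)).
apply: eq_measurable_fun => x _ /=.
rewrite /fubini_F /Rintegral [in RHS]integral_mkcond; congr fine.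
apply: eq_integral => y _ /=; rewrite /F /patch.
case: (boolP (y \in I01)) => hy.
  by rewrite ifT //; apply/mem_set; split => //; exact/set_mem.
rewrite ifF //; apply/negbTE/negP => /set_mem [_ /= hy']; move/negP: hy; apply.
exact/mem_set.
Qed.

(* Integrating over the coordinates [m, m+1, ...] of an environment whose
   first [m] entries are frozen to those of [e]; this is the form in which
   the iterated integral [cube_int] can be handled by induction. *)
Definition env_app (k m : nat) (e : nat -> R) (t : k.-tuple R) : nat -> R :=
  fun i => if (i < m)%N then e i else nth 0 t (i - m).

Definition env_ext (m : nat) (e : nat -> R) (y : R) : nat -> R :=
  fun i => if (i < m)%N then e i else y.

Lemma env_app_cons k m e y (t : k.-tuple R) :
  env_app m e (cons_tuple y t) = env_app m.+1 (env_ext m e y) t.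
Proof.
apply/funext => i; rewrite /env_app /env_ext /=.
case: (ltngtP i m) => [im|mi|->]; last by rewrite ltnSn subnn.
  by rewrite (ltn_trans im (ltnSn m)).
by rewrite ltnS leqNgt mi /= -[(i - m)%N](@prednK _) ?subn_gt0 // -subnS.
Qed.

Lemma env_app0_tnth k e (t : k.-tuple R) (i : 'I_k) : env_app 0 e t i = tnth t i.
Proof. by rewrite /env_app ltn0 subn0 (tnth_nth 0). Qed.

Lemma cube_int_env_app_S k m e (F : (nat -> R) -> R) :
  cube_int (fun t : k.+1.-tuple R => F (env_app m e t)) =
  \int[lam]_(y in I01) cube_int (fun t : k.-tuple R => F (env_app m.+1 (env_ext m e y) t)).
Proof. by apply: eq_Rintegral => y _; congr cube_int; apply/funext => t; rewrite env_app_cons. Qed.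

Lemma measurable_env_ext d (X : measurableType d) (e : X -> nat -> R) (f : X -> R) m :
  (forall i, measurable_fun setT (fun x => e x i)) -> measurable_fun setT f ->
  forall i, measurable_fun setT (fun x => env_ext m (e x) (f x) i).
Proof. by move=> me mf i; rewrite /env_ext; case: (i < m)%N. Qed.

Definition coord_measurable (Phi : (nat -> R) -> R) : Prop :=
  forall d (X : measurableType d) (v : X -> nat -> R),
  (forall i, measurable_fun setT (fun x => v x i)) ->
  measurable_fun setT (fun x => Phi (v x)).

Definition bounded01 (Phi : (nat -> R) -> R) : Prop := forall v, 0 <= Phi v <= 1.

(* Measurability and the bound have to be proved together: Tonelli needs the
   integrand nonnegative, and the bound needs the integrand measurable. *)
Lemma cube_int_measurable_bounded k Phi : coord_measurable Phi -> bounded01 Phi ->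
  (forall d (X : measurableType d) (e : X -> nat -> R) m,
    (forall i, measurable_fun setT (fun x => e x i)) ->
    measurable_fun setT (fun x => cube_int (fun t : k.-tuple R => Phi (env_app m (e x) t))))
  /\ (forall e m, 0 <= cube_int (fun t : k.-tuple R => Phi (env_app m e t)) <= 1).
Proof.
move=> mPhi bPhi; elim: k => [|k [IHm IHb]].
  split=> [d X e m me|e m] /=; last exact: bPhi.
  by apply: mPhi => i; rewrite /env_app; case: (i < m)%N; rewrite ?nth_nil.
split=> [d X e m me|e m]; last first.
  rewrite cube_int_env_app_S; apply: Rintegral_unit_bounded01 => //.
  by apply: (IHm _ R (env_ext m e)) => i; apply: measurable_env_ext.
under eq_fun do rewrite cube_int_env_app_S.
pose h (z : (X * measurableTypeR R)%type) :=
  cube_int (fun t : k.-tuple R => Phi (env_app m.+1 (env_ext m (e z.1) z.2) t)).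
apply: (measurable_Rintegral_unit (h := h)) => [|z]; last first.
  by case/andP: (IHb (env_ext m (e z.1) z.2) m.+1).
apply: (IHm _ _ (fun z => env_ext m (e z.1) z.2)).
by apply: measurable_env_ext => [i|]; [exact: measurableT_comp (me i) measurable_fst|].
Qed.

Lemma Rintegral_unit_sum (I : Type) (s : seq I) (c : I -> R) (g : I -> R -> R) :
  (forall i, measurable_fun setT (g i)) -> (forall i y, 0 <= g i y <= 1) ->
  \int[lam]_(y in I01) (\sum_(i <- s) c i * g i y) =
  \sum_(i <- s) c i * \int[lam]_(y in I01) g i y.
Proof.
move=> mg bg; elim: s => [|a s IH].
  under eq_Rintegral do rewrite big_nil.
  by rewrite big_nil Rintegral_cst // mul0r.
under eq_Rintegral do rewrite big_cons.
have bd i y : `|g i y| <= 1 by case/andP: (bg i y) => h0 h1; rewrite ger0_norm.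
rewrite RintegralD //.
- rewrite big_cons IH RintegralZl //; exact: (bounded_integrable_unit (mg a) (bd a)).
- apply: (@bounded_integrable_unit _ `|c a|).
    by apply: measurable_funM => //; exact: measurable_cst.
  by move=> y; rewrite normrM ler_piMr // bd.
- apply: (@bounded_integrable_unit _ (\sum_(i <- s) `|c i|)).
    by apply: measurable_sum => i; apply: measurable_funM => //; exact: measurable_cst.
  move=> y; apply: (le_trans (ler_norm_sum _ _ _)); apply: ler_sum => i _.
  by rewrite normrM ler_piMr // bd.
Qed.

Lemma cube_int_sum k (I : Type) (s : seq I) (c : I -> R) (Phis : I -> (nat -> R) -> R) :
  (forall i, coord_measurable (Phis i)) -> (forall i, bounded01 (Phis i)) -> forall e m,
  cube_int (fun t : k.-tuple R => \sum_(i <- s) c i * Phis i (env_app m e t)) =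
  \sum_(i <- s) c i * cube_int (fun t : k.-tuple R => Phis i (env_app m e t)).
Proof.
move=> mPhis bPhis; elim: k => [|k IH] e m //.
rewrite (cube_int_env_app_S _ _ _ (fun v => \sum_(i <- s) c i * Phis i v)).
under eq_Rintegral do rewrite IH.
rewrite Rintegral_unit_sum => [|i|i y].
- by apply: eq_bigr => i _; rewrite cube_int_env_app_S.
- have [mcube _] := cube_int_measurable_bounded k (mPhis i) (bPhis i).
  by apply: (mcube _ R (env_ext m e)) => j; apply: measurable_env_ext.
- exact: (cube_int_measurable_bounded k (mPhis i) (bPhis i)).2.
Qed.

Lemma eq_cube_int k (f g : k.-tuple R -> R) :
  (forall t : k.-tuple R, all (fun x => x \in `[0, 1]) t -> f t = g t) ->
  cube_int f = cube_int g.
Proof.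
elim: k f g => [|k IH] f g H /=; first by apply: H.
apply: eq_Rintegral => y yI; apply: IH => t ht; apply: H.
rewrite /= ht andbT; move: yI; rewrite inE /=; exact.
Qed.

End CubeIntegral.

Lemma prodr_natb (R : comPzSemiRingType) (I : finType) (c : I -> bool) :
  \prod_(i : I) ((c i)%:R : R) = ([forall i, c i])%:R.
Proof.
case: forallP => [h|/existsNP [i /negP/negbTE ci]]; first by rewrite big1 // => i _; rewrite h.
by rewrite (bigD1 i) //= ci mul0r.
Qed.

Lemma sumr_natb (R : pzSemiRingType) (I : finType) (c : I -> bool) :
  \sum_(i : I) ((c i)%:R : R) = #|[pred i | c i]|%:R.
Proof.
rewrite -sum1_card natr_sum [RHS]big_mkcond /=; apply: eq_bigr => i _.
by rewrite inE; case: (c i).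
Qed.

Lemma in_set_comprehension (X : Type) (P : X -> bool) x : (x \in [set y | P y]) = P x.
Proof. by apply/idP/idP => [/set_mem|/mem_set]. Qed.

Section TypeSum.
Variables (R : comNzRingType) (p : nat).
Local Notation T := (pair_idx p).

(* [type_sum good y] is the probability that a random graph on p vertices,
   where the pair u is an edge independently with probability [y u], has
   its adjacency pattern in [good]. *)
Definition type_sum (good : pred {ffun T -> bool}) (y : T -> R) : R :=
  \sum_(E | good E) \prod_(u : T) (if E u then y u else 1 - y u).

Definition edge_monomial (y : T -> R) (f : {ffun T -> bool}) : R :=
  \prod_(u : T) (if f u then y u else 1).

Definition mobius_coef (good : pred {ffun T -> bool}) (f : {ffun T -> bool}) : R :=
  \sum_(E | good E) \prod_(u : T)
     (if f u then (if E u then 1 else -1) else (if E u then 0 else 1)).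

(* Expanding [1 - y u] in every factor. *)
Lemma type_sum_expand good y :
  type_sum good y = \sum_f mobius_coef good f * edge_monomial y f.
Proof.
pose c (E : {ffun T -> bool}) u (b : bool) : R :=
  if b then (if E u then 1 else -1) else (if E u then 0 else 1).
transitivity (\sum_(E | good E) \sum_(f : {ffun T -> bool})
    \prod_(u : T) (c E u (f u) * (if f u then y u else 1))).
  apply: eq_bigr => E _.
  rewrite -(bigA_distr_bigA (fun u b => c E u b * (if b then y u else 1))) /=.
  apply: eq_bigr => u _; rewrite big_bool /c /=.
  by case: (E u); rewrite ?mul1r ?mul0r ?mulr1 ?addr0 ?mulN1r // addrC.
rewrite exchange_big /=; apply: eq_bigr => f _.
by rewrite mulr_suml; apply: eq_bigr => E _; rewrite -big_split.
Qed.

Lemma type_sum_indicator good (b : {ffun T -> bool}) :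
  type_sum good (fun u => (b u)%:R) = (good b)%:R.
Proof.
have point_mass (E : {ffun T -> bool}) :
    \prod_(u : T) (if E u then ((b u)%:R : R) else 1 - (b u)%:R) = (E == b)%:R.
  have -> : (E == b) = [forall u, E u == b u].
    by apply/eqP/forallP => [-> u //|Eb]; apply/ffunP => u; apply/eqP.
  by rewrite -prodr_natb; apply: eq_bigr => u _; case: (E u); case: (b u); rewrite ?subrr ?subr0.
rewrite /type_sum; under eq_bigr do rewrite point_mass.
rewrite big_mkcond (bigD1 b) //= eqxx big1 ?addr0; first by case: (good b); rewrite ?mulr1.
by move=> E /negbTE ->; case: (good E).
Qed.

End TypeSum.
Arguments mobius_coef {R p} good f.

Definition pair_var p (u : pair_idx p) : mpoly.mpoly #|pair_idx p| int :=
  mpoly.mpolyX int (mpoly.mnm1 (enum_rank u)).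

Definition type_poly p (good : pred {ffun pair_idx p -> bool}) :
    mpoly.mpoly #|pair_idx p| int :=
  \sum_(E | good E) \prod_(u : pair_idx p)
    (if E u then pair_var u else 1 - pair_var u).

Lemma eval_type_poly (R : realType) p good (y : pair_idx p -> R) :
  eval_pairs (type_poly good) y = type_sum good y.
Proof.
rewrite /eval_pairs /type_poly /type_sum; set e := mpoly.mmap _ _.
have eM : {morph e : x y / x * y}.
  exact: (mpoly.mmap_is_multiplicative _ (intr : {rmorphism int -> R})).1.
have e1 : e 1 = 1.
  exact: (mpoly.mmap_is_multiplicative _ (intr : {rmorphism int -> R})).2.
have eX u : e (pair_var u) = y u.
  by rewrite /e /pair_var (mpoly.mmapX _ (intr : {rmorphism int -> R})) mpoly.mmap1U enum_rankK.
have eD : {morph e : x y / x + y} by move=> x z; exact: mpoly.mmapD.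
have eB : {morph e : x y / x - y} by move=> x z; exact: mpoly.mmapB.
rewrite (big_morph e eD (mpoly.mmap0 _ _)); apply: eq_bigr => E _.
rewrite (big_morph e eM e1); apply: eq_bigr => u _.
by case: (E u); rewrite ?eX // eB e1 eX.
Qed.

Section EdgeGraph.
Variable p : nat.
Local Notation T := (pair_idx p).

Definition edge_graph (f : {ffun T -> bool}) : rel 'I_p :=
  fun i j => [exists u : T, f u && ((val u == (i, j)) || (val u == (j, i)))].

Lemma edge_graph_simple (f : {ffun T -> bool}) : simple_graph (edge_graph f).
Proof.
split=> [i j|i]; first by apply/existsP/existsP => -[u /andP [fu h]]; exists u; rewrite fu orbC.
apply/existsP => -[u /andP [_]]; rewrite orbb => /eqP e.
by have := valP u; rewrite /= e ltnn.
Qed.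

Lemma edge_graph_pair (f : {ffun T -> bool}) (u : T) : edge_graph f (val u).1 (val u).2 = f u.
Proof.
apply/existsP/idP => [[v /andP [fv /orP [/eqP e|/eqP e]]]|fu].
- by have -> : u = v by apply/val_inj; rewrite e -surjective_pairing.
- by have := valP v; have := valP u; rewrite e /= => /ltn_trans h /h; rewrite ltnn.
- by exists u; rewrite fu -surjective_pairing eqxx.
Qed.

Lemma forall_edge_graph (V : Type) (adj : rel V) (f : {ffun T -> bool}) (h : 'I_p -> V) :
  symmetric adj ->
  [forall u : T, f u ==> adj (h (val u).1) (h (val u).2)] =
  [forall i, forall j, edge_graph f i j ==> adj (h i) (h j)].
Proof.
move=> sym; apply/forallP/forallP => [H i|H u].
  apply/forallP => j; apply/implyP => /existsP [u /andP [fu /orP [] /eqP e]];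
    by have := implyP (H u) fu; rewrite e //= sym.
by apply/implyP => fu; have := forallP (H (val u).1) (val u).2; rewrite edge_graph_pair fu.
Qed.

End EdgeGraph.

Section CountingTuples.
Variables (R : comNzRingType) (p : nat) (G : fin_graph).
Local Notation T := (pair_idx p).
Local Notation V := (fV G).

Definition adj_vals (t : p.-tuple V) : T -> R :=
  fun u => (fadj (tnth t (val u).1) (tnth t (val u).2))%:R.

Definition adj_pattern (t : p.-tuple V) : {ffun T -> bool} :=
  [ffun u => fadj (tnth t (val u).1) (tnth t (val u).2)].

Lemma type_sum_adj_vals good t : type_sum good (adj_vals t) = (good (adj_pattern t))%:R.
Proof.
rewrite -type_sum_indicator /type_sum; apply: eq_bigr => E _; apply: eq_bigr => u _.
by rewrite /adj_vals ffunE.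
Qed.

Lemma sum_edge_monomial f :
  \sum_(t : p.-tuple V) edge_monomial (adj_vals t) f = (hom_count (edge_graph f) G)%:R.
Proof.
have monomial_hom t : edge_monomial (adj_vals t) f =
    ([forall u : T, f u ==> fadj (tnth t (val u).1) (tnth t (val u).2)])%:R.
  by rewrite -prodr_natb; apply: eq_bigr => u _; rewrite /adj_vals; case: (f u).
under eq_bigr do rewrite monomial_hom.
rewrite sumr_natb /hom_count -(card_imset _ (f := fun t : p.-tuple V => [ffun i => tnth t i])).
  congr (_%:R); apply: eq_card => g; rewrite in_set_comprehension; apply/imsetP/idP => [[t]|Hg].
    rewrite inE => Ht ->; rewrite -(forall_edge_graph _ _ (@fadj_sym G)).
    by apply/forallP => u; have := forallP Ht u; rewrite !ffunE.
  exists [tuple g i | i < p].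
    move: Hg; rewrite -(forall_edge_graph _ _ (@fadj_sym G)) => /forallP Hg.
    by rewrite inE; apply/forallP => u; have := Hg u; rewrite !tnth_mktuple.
  by apply/ffunP => i; rewrite ffunE tnth_mktuple.
by move=> t1 t2 /ffunP h; apply: eq_from_tnth => i; have := h i; rewrite !ffunE.
Qed.

End CountingTuples.

Lemma expn_sub_ffact_le (N p : nat) :
  (N ^_ p <= N ^ p)%N /\ ((N ^ p - N ^_ p) * N <= p * p * N ^ p)%N.
Proof.
elim: p => [|p [IH1 IH2]]; first by rewrite ffactn0 expn0 subnn.
rewrite ffactnSr expnS.
move: IH1 IH2; set a := (N ^ p)%N; set b := (N ^_ p)%N => IH1 IH2.
split; first nia.
have h1 : (N * a - b * (N - p) <= N * (a - b) + b * p)%N by nia.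
have h2 : ((N * (a - b) + b * p) * N <= p * p * (N * a) + p * (N * a))%N by nia.
nia.
Qed.

Lemma card_nonuniq_tuples (V : finType) p :
  #|[pred t : p.-tuple V | ~~ uniq t]| = (#|V| ^ p - #|V| ^_ p)%N.
Proof.
have cu : #|[pred t : p.-tuple V | uniq t]| = #|V| ^_ p.
  rewrite -(card_uniq_tuples p (predT : pred V)); apply: eq_card => t.
  by rewrite !inE all_predT.
have := cardC [pred t : p.-tuple V | uniq t].
by rewrite card_tuple cu => <-; rewrite addKn; apply: eq_card => t; rewrite !inE.
Qed.

Lemma frac_nonuniq_tuples_le (R : realFieldType) (V : finType) p : (0 < #|V|)%N ->
  (\sum_(t : p.-tuple V) ((~~ uniq t)%:R : R)) / (#|V|%:R ^+ p) <=
  (p * p)%:R / #|V|%:R.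
Proof.
move=> V0; rewrite sumr_natb card_nonuniq_tuples.
rewrite ler_pdivrMr ?exprn_gt0 ?ltr0n // mulrAC ler_pdivlMr ?ltr0n //.
by rewrite -natrX -!natrM ler_nat; have [] := expn_sub_ffact_le #|V| p.
Qed.

Lemma cvg_dist_le_inv (R : realType) (a b : nat -> R) (l c : R) (N : nat -> nat) :
  (forall M, \forall n \near \oo, (M <= N n)%N) ->
  (\forall n \near \oo, `|a n - b n| <= c / (N n)%:R) ->
  b @ \oo --> l -> a @ \oo --> l.
Proof.
move=> Noo ab bl; have -> : a = (fun n => (a n - b n) + b n) by apply/funext => n; rewrite subrK.
rewrite -[l]add0r; apply: cvgD bl; apply/cvgr0Pnorm_lt => eps eps0.
pose M := Num.Def.archi_bound (`|c| / eps).
have cM : `|c| / eps < M%:R by apply: archi_boundP; rewrite divr_ge0 // ltW.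
apply: filterS2 (Noo M.+1) ab => n Mn abn; apply: le_lt_trans abn _.
have N0 : (0 : R) < (N n)%:R by rewrite ltr0n; exact: leq_trans Mn.
rewrite ltr_pdivrMr //; move: cM; rewrite ltr_pdivrMr // => cM.
apply: le_lt_trans (ler_norm c) (lt_le_trans cM _).
by rewrite [leRHS]mulrC ler_pM2r // ler_nat ltnW.
Qed.

(* Extended by 0 off the unit square, where the graphon hypothesis says
   nothing, so that it becomes measurable on the whole plane. *)
Definition graphon_patch (R : realType) (W : R -> R -> R) : R * R -> R :=
  (fun z => W z.1 z.2) \_ unit_sq.

Lemma graphon_patchE (R : realType) (W : R -> R -> R) x y :
  x \in `[0, 1] -> y \in `[0, 1] -> graphon_patch W (x, y) = W x y.
Proof. by move=> x01 y01; rewrite /graphon_patch /patch ifT //; apply/mem_set. Qed.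

Lemma measurable_graphon_patch (R : realType) (W : R -> R -> R) :
  graphon W -> measurable_fun setT (graphon_patch W).
Proof.
move=> [mW _]; have msq : measurable (@unit_sq R) by apply: measurableX.
by apply: (measurable_restrict _ msq measurableT).1; rewrite setTI.
Qed.

Lemma graphon_patch_in01 (R : realType) (W : R -> R -> R) z :
  graphon W -> 0 <= graphon_patch W z <= 1.
Proof.
move=> [_ [_ W01]]; case: z => x y; rewrite /graphon_patch /patch.
by case: ifP => [/set_mem [/= x01 y01]|_]; [exact: W01|rewrite lexx ler01].
Qed.

Definition edge_product (R : realType) (F : R * R -> R) p
    (f : {ffun pair_idx p -> bool}) (v : nat -> R) : R :=
  \prod_(u : pair_idx p) (if f u then F (v (val u).1, v (val u).2) else 1).

Lemma coord_measurable_edge_product (R : realType) (F : R * R -> R) p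
    (f : {ffun pair_idx p -> bool}) :
  measurable_fun setT F -> coord_measurable (edge_product F f).
Proof.
move=> mF d X v mv; apply: measurable_prod => u _; case: (f u) => //.
exact: measurableT_comp mF (measurable_fun_pair (mv _) (mv _)).
Qed.

Lemma bounded01_edge_product (R : realType) (F : R * R -> R) p
    (f : {ffun pair_idx p -> bool}) :
  (forall z, 0 <= F z <= 1) -> bounded01 (edge_product F f).
Proof.
move=> F01 v; apply/andP; split; [apply: prodr_ge0|apply: prodr_ile1] => u _;
  by case: (f u); rewrite ?lexx ?ler01 //; case/andP: (F01 (v (val u).1, v (val u).2)).
Qed.

Lemma cube_int_type_poly (R : realType) (W : R -> R -> R) p good :
  graphon W ->
  cube_int (fun x : p.-tuple R => eval_pairs (type_poly good)
      (fun u : pair_idx p => W (tnth x (val u).1) (tnth x (val u).2))) =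
  \sum_f mobius_coef good f * hom_dens_graphon (edge_graph f) W.
Proof.
move=> gW; pose F := graphon_patch W; pose env x := @env_app R p 0 (fun=> 0) x.
have FW (x : p.-tuple R) (u : pair_idx p) : all (fun y => y \in `[0, 1]) x ->
    F (env x (val u).1, env x (val u).2) = W (tnth x (val u).1) (tnth x (val u).2).
  move=> x01; rewrite /F /env !env_app0_tnth graphon_patchE //;
    by apply: (allP x01); apply: mem_tnth.
transitivity (cube_int (fun x : p.-tuple R =>
    \sum_f mobius_coef good f * edge_product F f (env x))).
  apply: eq_cube_int => x x01; rewrite eval_type_poly type_sum_expand.
  apply: eq_bigr => f _; congr (_ * _); apply: eq_bigr => u _.
  by case: (f u); rewrite ?FW.
rewrite cube_int_sum => [|f|f]; last 2 first.
- by apply: coord_measurable_edge_product; exact: measurable_graphon_patch.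
- by apply: bounded01_edge_product => z; exact: graphon_patch_in01.
apply: eq_bigr => f _; congr (_ * _); apply: eq_cube_int => x x01.
rewrite big_mkcondr (big_sub (fun ij : 'I_p * 'I_p => (ij.1 < ij.2)%N)).
by apply: eq_bigr => u _; rewrite edge_graph_pair; case: (f u); rewrite ?FW.
Qed.

Section StonePairing.
Variables (p : nat) (phi : fo) (G : fin_graph).
Local Notation V := (fV G).

Lemma hom_density_combination (R : fieldType) (good : pred {ffun pair_idx p -> bool}) :
  \sum_f mobius_coef good f * ((hom_count (edge_graph f) G)%:R / #|V|%:R ^+ p) =
  (\sum_(t : p.-tuple V) ((good (adj_pattern t))%:R : R)) / #|V|%:R ^+ p.
Proof.
under eq_bigr do rewrite mulrA; rewrite -mulr_suml; congr (_ / _).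
transitivity (\sum_f \sum_(t : p.-tuple V) mobius_coef good f * edge_monomial (adj_vals R t) f).
  by apply: eq_bigr => f _; rewrite -sum_edge_monomial mulr_sumr.
by rewrite exchange_big; apply: eq_bigr => t _; rewrite -type_sum_adj_vals type_sum_expand.
Qed.

Lemma uniq_has_type (t : p.-tuple V) : uniq t -> has_type (@fadj G) (adj_pattern t) (env_of t).
Proof.
move=> ut; split=> u; last by rewrite /env_of ffunE !(tnth_nth (fpt G)).
rewrite /env_of => /eqP; rewrite nth_uniq ?size_tuple // ltn_eqF //; exact: (valP u).
Qed.

(* Only the non-injective tuples, a vanishing proportion, escape the type
   decisions. *)
Lemma stone_pairing_type_sum_dist (R : realType) :
  (forall E : {ffun pair_idx p -> bool}, models (@fadj G) (type_decision phi E)) ->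
  `|stone_pairing p phi G -
    \sum_(f : {ffun pair_idx p -> bool}) mobius_coef (fun E => `[< holds_on_type phi E >]) f *
      ((hom_count (edge_graph f) G)%:R / #|V|%:R ^+ p)| <= (p * p)%:R / #|V|%:R :> R.
Proof.
move=> decide; have V0 : (0 < #|V|)%N by apply/card_gt0P; exists (fpt G).
rewrite hom_density_combination /stone_pairing.
have -> : #|[set t : p.-tuple V | `[< sat (@fadj G) (env_of t) phi >] ]| =
    #|[pred t : p.-tuple V | `[< sat (@fadj G) (env_of t) phi >] ]|.
  by apply: eq_card => t; rewrite in_set_comprehension inE.
rewrite -sumr_natb -mulrBl -sumrB normrM [`|_ ^- _|]ger0_norm ?invr_ge0 ?exprn_ge0 ?ler0n //.
apply: le_trans (frac_nonuniq_tuples_le R p V0); rewrite ler_wpM2r ?invr_ge0 ?exprn_ge0 ?ler0n //.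
apply: le_trans (ler_norm_sum _ _ _) _; apply: ler_sum => t _.
case: (boolP (uniq t)) => ut /=.
  by rewrite (asbool_equiv_eq (models_type_decision (decide _) (uniq_has_type ut))) subrr normr0.
by case: `[< _ >]; case: `[< _ >]; rewrite ?subrr ?normr0 ?subr0 ?sub0r ?normrN ?normr1.
Qed.

End StonePairing.

Lemma elem_conv_card_near (G : nat -> fin_graph) (V : countType) (adj : rel V) :
  is_rado adj -> elem_conv G adj -> forall M, \forall n \near \oo, (M <= #|fV (G n)|)%N.
Proof.
move=> r ec M; have := (ec _ (at_least_sentence M)).1 (rado_models_at_least (M := M) r).
by apply: filterS => n; exact: models_at_least_card.
Qed.

Lemma elem_conv_type_decision_near (G : nat -> fin_graph) (V : countType) (adj : rel V)
    p phi :
  is_rado adj -> elem_conv G adj -> free_among p phi ->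
  \forall n \near \oo, forall E : {ffun pair_idx p -> bool},
    models (@fadj (G n)) (type_decision phi E).
Proof.
move=> r ec fphi; apply: (@filter_forall nat {ffun pair_idx p -> bool}
  (fun E n => models (@fadj (G n)) (type_decision phi E))) => E.
exact: (ec _ (type_decision_sentence E fphi)).1 (rado_models_type_decision E r fphi).
Qed.

Theorem theorem5p15 (p : nat) (phi : fo) (Hphi : free_among p phi) :
  exists P : mpoly.mpoly #|pair_idx p| int,
    forall (R : realType) (V : countType) (adj : rel V), is_rado adj ->
    forall G : nat -> fin_graph, elem_conv G adj ->
    forall W : R -> R -> R, graphon W -> L_conv G W ->
      (fun n => stone_pairing p phi (G n) : R) @ \oo -->
        cube_int (fun x : p.-tuple R =>
          eval_pairs P (fun ij : pair_idx p =>
            W (tnth x (val ij).1) (tnth x (val ij).2))).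
Proof.
pose good (E : {ffun pair_idx p -> bool}) := `[< holds_on_type phi E >].
exists (type_poly good) => R V adj rado G ec W gW LW.
rewrite cube_int_type_poly //.
apply: (@cvg_dist_le_inv R _ _ _ (p * p)%:R (fun n => #|fV (G n)|)).
- exact: elem_conv_card_near rado ec.
- apply: filterS (elem_conv_type_decision_near rado ec Hphi) => n decide.
  exact: stone_pairing_type_sum_dist decide.
- apply: cvg_big => [|f _]; first exact: add_continuous.
  by apply: cvgMr; exact: LW (edge_graph_simple f).
Qed.
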